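(* Let $a,a^\dagger$ be the annihilation and creation operators of the harmonic oscillator, $[a,a^\dagger]=1$, with vacuum $|0\rangle$ ($a|0\rangle=0$, $\langle0|a^\dagger=0$, $\langle0|0\rangle=1$). For positive integers $n$ let $A_n^\dagger$ act on the formal span of $\{(a^\dagger)^m|0\rangle\}_{m\ge0}$ by $A_n^\dagger(a^\dagger)^m|0\rangle=\frac{m!}{(mn)!}(a^\dagger)^{mn}|0\rangle$, and let $A_n$ act from the right on the formal span of $\{\langle0|a^m\}_{m\ge0}$ by $\langle0|a^mA_n=\langle0|a^{mn}$. For a prime $p$ and $\mathrm{Re}(s)>1$ let $$\zeta_p(s):=\frac{1}{p!}\langle0|\,a^p\,\frac{1}{1-(a^\dagger a)^{-s}}\,(a^\dagger)^p\,|0\rangle .$$ Then $$\zeta_p(s)=\langle0|\,a\Big(\frac{1}{1-A_p}\Big)(a^\dagger a)^{-s}\Big(\frac{1}{1-A_p^\dagger}\Big)a^\dagger\,|0\rangle .$$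
   Context: The number states $|n\rangle=(a^\dagger)^n|0\rangle/\sqrt{n!}$ are orthonormal; for a function $f$, $f(a^\dagger a)|n\rangle=f(n)|n\rangle$ for $n\ge1$, so $(a^\dagger a)^{-s}|n\rangle=n^{-s}|n\rangle$ and $\frac{1}{1-(a^\dagger a)^{-s}}|n\rangle=\frac{1}{1-n^{-s}}|n\rangle$ ($n\ge2$). Here $\frac{1}{1-A_p^\dagger}:=\sum_{k\ge0}(A_p^\dagger)^k$ and $\frac{1}{1-A_p}:=\sum_{k\ge0}A_p^k$, applied formally and paired termwise. *)

From Stdlib Require Import Reals Arith ZArith Znumtheory.
From Coquelicot Require Import Coquelicot.
Open Scope R_scope.

(* A ket is a formal (possibly infinite) combination  sum_m v m (a^dag)^m |0>,
   represented by its coefficient function (unnormalized basis). *)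
Definition Ket := nat -> C.
(* A bra is a formal combination  sum_m b m <0| a^m. *)
Definition Bra := nat -> C.

(* the basis vector (a^dag)^m |0>  (resp. <0| a^m) *)
Definition basis (m : nat) : nat -> C :=
  fun k => if Nat.eqb k m then RtoC 1 else RtoC 0.

Definition is_cseries (a : nat -> C) (l : C) : Prop :=
  is_series (fun n => Re (a n)) (Re l) /\ is_series (fun n => Im (a n)) (Im l).
Definition ex_cseries (a : nat -> C) : Prop := exists l, is_cseries a l.
Definition CSeries (a : nat -> C) : C :=
  (Series (fun n => Re (a n)), Series (fun n => Im (a n))).

(* pairing:  <0| a^m (a^dag)^n |0> = delta_{mn} m!  (consequence of [a,a^dag]=1,
   a|0>=0, <0|0>=1) *)
Definition braket (b : Bra) (v : Ket) : C :=
  CSeries (fun m => Cmult (Cmult (b m) (v m)) (RtoC (INR (fact m)))).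

Definition cpowR (x : R) (z : C) : C :=
  (exp (Re z * ln x) * cos (Im z * ln x), exp (Re z * ln x) * sin (Im z * ln x)).

(* (a^dag a)^{-s} : acts on (a^dag)^m|0> by m^{-s}   (meaningful for m >= 1) *)
Definition num_pow (s : C) (v : Ket) : Ket :=
  fun m => Cmult (cpowR (INR m) (Copp s)) (v m).

(* 1/(1-(a^dag a)^{-s}) : acts on (a^dag)^m|0> by 1/(1-m^{-s})  (meaningful for m >= 2) *)
Definition num_resolvent (s : C) (v : Ket) : Ket :=
  fun m => Cmult (Cinv (Cminus (RtoC 1) (cpowR (INR m) (Copp s)))) (v m).

(* A_n^dag (a^dag)^m |0> = m!/(mn)! (a^dag)^{mn} |0>, extended linearly (n >= 1) *)
Definition A_dag (n : nat) (v : Ket) : Ket :=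
  fun k => if Nat.eqb (k mod n)%nat 0
           then Cmult (v (k / n)%nat) (RtoC (INR (fact (k / n)%nat) / INR (fact k)))
           else RtoC 0.

(* <0| a^m A_n = <0| a^{mn}, extended linearly (n >= 1) *)
Definition A_right (n : nat) (b : Bra) : Bra :=
  fun k => if Nat.eqb (k mod n)%nat 0 then b (k / n)%nat else RtoC 0.

Definition zeta_p (p : nat) (s : C) : C :=
  Cmult (RtoC (/ INR (fact p))) (braket (basis p) (num_resolvent s (basis p))).

(* the (j,k) term of  <0| a (sum_j A_p^j) (a^dag a)^{-s} (sum_k (A_p^dag)^k) a^dag |0>,
   paired termwise *)
Definition rhs_term (p : nat) (s : C) (j k : nat) : C :=
  braket (Nat.iter j (A_right p) (basis 1%nat))
         (num_pow s (Nat.iter k (A_dag p) (basis 1%nat))).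

From Stdlib Require Import Reals Arith ZArith Znumtheory Lia Lra FunctionalExtensionality.
From Coquelicot Require Import Coquelicot.
Open Scope R_scope.

(* Both sides are computed in closed form.  Pairing with a basis bra picks out one
   coefficient, so zeta_p(s) = 1/(1 - p^-s).  On the right, <0|a A_p^j = <0|a^(p^j) and
   (A_p^dag)^k a^dag|0> = (a^dag)^(p^k)|0>/(p^k)!, so the (j,k) term is delta_jk p^(-js):
   each inner series has one nonzero term and the outer one is geometric with ratio
   p^-s, of modulus p^(-Re s) < 1. *)

Lemma Re_sum_n (a : nat -> C) n : Re (sum_n a n) = sum_n (fun k => Re (a k)) n.
Proof.
  induction n as [|n IH]; [now rewrite !sum_O|].
  rewrite !sum_Sn, <- IH. reflexivity.
Qed.

Lemma Im_sum_n (a : nat -> C) n : Im (sum_n a n) = sum_n (fun k => Im (a k)) n.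
Proof.
  induction n as [|n IH]; [now rewrite !sum_O|].
  rewrite !sum_Sn, <- IH. reflexivity.
Qed.

Lemma sum_n_geom_C (W : C) n :
  Cmult (sum_n (fun k => Cpow W k) n) (Cminus 1 W) = Cminus 1 (Cpow W (S n)).
Proof.
  induction n as [|n IH].
  - rewrite sum_O. simpl. ring.
  - rewrite sum_Sn. change (plus ?x ?y) with (Cplus x y).
    rewrite Cmult_plus_distr_r, IH, !Cpow_S. ring.
Qed.

Lemma is_lim_seq_of_dist_bound (u e : nat -> R) (l : R) :
  (forall n, Rabs (u n - l) <= e n) -> is_lim_seq e 0 -> is_lim_seq u l.
Proof.
  intros Hue He.
  apply is_lim_seq_le_le with (u := fun n => l - e n) (w := fun n => l + e n).
  - intro n. specialize (Hue n). apply Rabs_le_between in Hue. lra.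
  - replace (Finite l) with (Rbar_minus l 0) by (simpl; f_equal; ring).
    apply is_lim_seq_minus'; [apply is_lim_seq_const | exact He].
  - replace (Finite l) with (Rbar_plus l 0) by (simpl; f_equal; ring).
    apply is_lim_seq_plus'; [apply is_lim_seq_const | exact He].
Qed.

Lemma Rabs_Im_le_Cmod (c : C) : Rabs (Im c) <= Cmod c.
Proof.
  unfold Cmod. rewrite <- sqrt_Rsqr_abs. apply sqrt_le_1_alt.
  destruct c as [x y]. unfold Rsqr. simpl. nra.
Qed.

Lemma is_cseries_Cmod (a : nat -> C) (l : C) :
  is_lim_seq (fun n => Cmod (Cminus (sum_n a n) l)) 0 -> is_cseries a l.
Proof.
  intro Hlim. split; refine (is_lim_seq_of_dist_bound _ _ _ _ Hlim); intro n.
  - rewrite <- Re_sum_n. exact (re_le_Cmod (Cminus (sum_n a n) l)).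
  - rewrite <- Im_sum_n. exact (Rabs_Im_le_Cmod (Cminus (sum_n a n) l)).
Qed.

Definition single (i : nat) (x : C) : nat -> C :=
  fun m => if Nat.eqb m i then x else 0.

Lemma sum_n_single i x n : sum_n (single i x) n = if Nat.ltb n i then RtoC 0 else x.
Proof.
  unfold single. induction n as [|n IH].
  - rewrite sum_O. now destruct i.
  - rewrite sum_Sn, IH. change (plus ?u ?v) with (Cplus u v).
    destruct (Nat.ltb_spec n i), (Nat.ltb_spec (S n) i), (Nat.eqb_spec (S n) i);
      try lia; now rewrite ?Cplus_0_l, ?Cplus_0_r.
Qed.

Lemma is_cseries_single i x : is_cseries (single i x) x.
Proof.
  apply is_cseries_Cmod, (is_lim_seq_incr_n _ i).
  apply is_lim_seq_ext with (u := fun _ => 0); [|apply is_lim_seq_const].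
  intro n. rewrite sum_n_single.
  destruct (Nat.ltb_spec (n + i) i); [lia|].
  replace (Cminus x x) with (RtoC 0) by ring. now rewrite Cmod_0.
Qed.

Lemma is_cseries_geom (W : C) : Cmod W < 1 ->
  is_cseries (fun k => Cpow W k) (Cinv (Cminus 1 W)).
Proof.
  intro HW.
  assert (H1W : Cminus 1 W <> 0).
  { intro E. assert (W = 1) as ->.
    { replace W with (Cminus 1 (Cminus 1 W)) by ring. rewrite E. ring. }
    rewrite Cmod_1 in HW. lra. }
  apply is_cseries_Cmod.
  apply is_lim_seq_ext with (u := fun n => Cmod W ^ S n * / Cmod (Cminus 1 W)).
  - intro n.
    assert (Hsum : @eq C (sum_n (fun k => Cpow W k) n)
                     (Cmult (Cminus 1 (Cpow W (S n))) (Cinv (Cminus 1 W)))).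
    { now rewrite <- sum_n_geom_C, <- Cmult_assoc, Cinv_r, Cmult_1_r. }
    rewrite Hsum.
    replace (Cminus (Cmult (Cminus 1 (Cpow W (S n))) (Cinv (Cminus 1 W))) (Cinv (Cminus 1 W)))
      with (Cmult (Copp (Cpow W (S n))) (Cinv (Cminus 1 W))) by ring.
    now rewrite Cmod_mult, Cmod_inv, Cmod_opp, Cmod_pow.
  - replace (Finite 0) with (Rbar_mult 0 (/ Cmod (Cminus 1 W))) by (simpl; f_equal; ring).
    apply is_lim_seq_scal_r, (is_lim_seq_incr_1 (fun n => Cmod W ^ n)), is_lim_seq_geom.
    now rewrite Rabs_pos_eq by apply Cmod_ge_0.
Qed.

Lemma CSeries_unique (a : nat -> C) (l : C) : is_cseries a l -> CSeries a = l.
Proof.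
  intros [HRe HIm]. unfold CSeries.
  rewrite (is_series_unique _ _ HRe), (is_series_unique _ _ HIm).
  now destruct l.
Qed.

Lemma braket_basis_l (m : nat) (v : Ket) :
  braket (basis m) v = Cmult (v m) (RtoC (INR (fact m))).
Proof.
  unfold braket. apply CSeries_unique.
  replace (fun k => _) with (single m (Cmult (v m) (RtoC (INR (fact m))))).
  { apply is_cseries_single. }
  apply functional_extensionality. intro k. unfold single, basis.
  destruct (Nat.eqb_spec k m) as [->|]; ring.
Qed.

Lemma cpowR_1 (z : C) : cpowR 1 z = 1.
Proof.
  unfold cpowR. rewrite ln_1, !Rmult_0_r, exp_0, cos_0, sin_0.
  apply injective_projections; simpl; ring.
Qed.

Lemma cpowR_mult (x y : R) (z : C) : 0 < x -> 0 < y ->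
  cpowR (x * y) z = Cmult (cpowR x z) (cpowR y z).
Proof.
  intros Hx Hy. unfold cpowR. rewrite ln_mult by assumption.
  rewrite !Rmult_plus_distr_l, exp_plus, cos_plus, sin_plus.
  apply injective_projections; simpl; ring.
Qed.

Lemma cpowR_pow (x : R) (z : C) (j : nat) : 0 < x ->
  cpowR (x ^ j) z = Cpow (cpowR x z) j.
Proof.
  intro Hx. induction j as [|j IH]; simpl.
  - apply cpowR_1.
  - rewrite cpowR_mult, IH by (try apply pow_lt; assumption). reflexivity.
Qed.

Lemma Cmod_cpowR (x : R) (z : C) : Cmod (cpowR x z) = exp (Re z * ln x).
Proof.
  unfold cpowR, Cmod. cbn [fst snd].
  set (r := exp (Re z * ln x)). set (t := Im z * ln x).
  replace ((r * cos t) ^ 2 + (r * sin t) ^ 2) with (Rsqr r).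
  - apply sqrt_Rsqr. left. apply exp_pos.
  - pose proof (sin2_cos2 t). unfold Rsqr in *. nra.
Qed.

Lemma Cmod_cpowR_opp_lt_1 (x : R) (z : C) : 1 < x -> 0 < Re z ->
  Cmod (cpowR x (Copp z)) < 1.
Proof.
  intros Hx Hz. rewrite Cmod_cpowR, <- exp_0. apply exp_increasing.
  assert (0 < ln x) by (rewrite <- ln_1; apply ln_increasing; lra).
  unfold Re in *. simpl. nra.
Qed.

Lemma A_right_basis (p m : nat) : (0 < p)%nat -> A_right p (basis m) = basis (m * p).
Proof.
  intro Hp. apply functional_extensionality. intro k. unfold A_right, basis.
  destruct (Nat.eqb_spec k (m * p)) as [->|Hk].
  - now rewrite Nat.Div0.mod_mul, Nat.div_mul, !Nat.eqb_refl by lia.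
  - destruct (Nat.eqb_spec (k mod p) 0); [|reflexivity].
    destruct (Nat.eqb_spec (k / p) m); [|reflexivity].
    pose proof (Nat.div_mod k p). subst m. nia.
Qed.

Lemma A_dag_single (p m : nat) (c : C) : (0 < p)%nat ->
  A_dag p (single m c) =
  single (m * p) (Cmult c (RtoC (INR (fact m) / INR (fact (m * p))))).
Proof.
  intro Hp. apply functional_extensionality. intro k. unfold A_dag, single.
  destruct (Nat.eqb_spec k (m * p)) as [->|Hk].
  - now rewrite Nat.Div0.mod_mul, Nat.div_mul, !Nat.eqb_refl by lia.
  - destruct (Nat.eqb_spec (k mod p) 0); [|reflexivity].
    destruct (Nat.eqb_spec (k / p) m).
    + pose proof (Nat.div_mod k p). subst m. nia.
    + apply Cmult_0_l.
Qed.

Lemma iter_A_right_basis (p j : nat) : (0 < p)%nat ->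
  Nat.iter j (A_right p) (basis 1) = basis (p ^ j).
Proof.
  intro Hp. induction j as [|j IH]; [reflexivity|].
  simpl Nat.iter. rewrite IH, A_right_basis, Nat.mul_comm by exact Hp. reflexivity.
Qed.

Lemma iter_A_dag_basis (p k : nat) : (0 < p)%nat ->
  Nat.iter k (A_dag p) (basis 1) = single (p ^ k) (RtoC (/ INR (fact (p ^ k)))).
Proof.
  intro Hp. induction k as [|k IH].
  - simpl. now rewrite Rinv_1.
  - simpl Nat.iter.
    rewrite IH, A_dag_single, Nat.mul_comm, <- Nat.pow_succ_r' by exact Hp.
    f_equal. rewrite <- RtoC_mult. f_equal.
    pose proof (INR_fact_neq_0 (p ^ k)). pose proof (INR_fact_neq_0 (p ^ S k)).
    now field.
Qed.

Lemma rhs_term_diag (p : nat) (s : C) (j : nat) : (1 < p)%nat ->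
  rhs_term p s j = single j (cpowR (INR (p ^ j)) (Copp s)).
Proof.
  intro Hp. apply functional_extensionality. intro k. unfold rhs_term.
  rewrite iter_A_right_basis, iter_A_dag_basis, braket_basis_l by lia.
  unfold num_pow, single.
  pose proof (INR_fact_neq_0 (p ^ j)).
  destruct (Nat.eqb_spec k j) as [->|Hkj].
  - rewrite Nat.eqb_refl, <- Cmult_assoc, <- RtoC_mult, Rinv_l by assumption.
    apply Cmult_1_r.
  - destruct (Nat.eqb_spec (p ^ j) (p ^ k)) as [Hpow|].
    + apply Nat.pow_inj_r in Hpow; [congruence | exact Hp].
    + ring.
Qed.

Lemma zeta_p_val (p : nat) (s : C) :
  zeta_p p s = Cinv (Cminus 1 (cpowR (INR p) (Copp s))).
Proof.
  unfold zeta_p. rewrite braket_basis_l.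
  unfold num_resolvent, basis. rewrite Nat.eqb_refl, Cmult_1_r.
  rewrite Cmult_comm, <- Cmult_assoc, <- RtoC_mult, Rinv_r by apply INR_fact_neq_0.
  apply Cmult_1_r.
Qed.

Theorem mainTheorem7 (p : nat) (s : C) :
  prime (Z.of_nat p) -> 1 < Re s ->
  (forall j : nat, ex_cseries (fun k => rhs_term p s j k)) /\
  is_cseries (fun j => CSeries (fun k => rhs_term p s j k)) (zeta_p p s).
Proof.
  intros Hprime Hs.
  assert (Hp : (1 < p)%nat) by (pose proof (prime_ge_2 _ Hprime); lia).
  assert (Hinner : forall j, is_cseries (rhs_term p s j) (Cpow (cpowR (INR p) (Copp s)) j)).
  { intro j. rewrite rhs_term_diag, pow_INR, cpowR_pow by (try apply lt_0_INR; lia).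
    apply is_cseries_single. }
  split.
  - intro j. eexists. apply Hinner.
  - replace (fun j => CSeries (fun k => rhs_term p s j k)) with (Cpow (cpowR (INR p) (Copp s))).
    + rewrite zeta_p_val. apply is_cseries_geom, Cmod_cpowR_opp_lt_1; [|lra].
      now apply lt_1_INR.
    + apply functional_extensionality. intro j. symmetry. apply CSeries_unique, Hinner.
Qed.
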